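(* Let $\psi_2$ be a finite pruned graph without half-loops such that every connected component of $\psi_2$ has positive order, and let $\psi_1$ be a proper subgraph of $\psi_2$. Then $\mathrm{ord}(\psi_1)<\mathrm{ord}(\psi_2)$.
   Context: Graphs may have multiple edges and whole-loops. The order of a graph is $\mathrm{ord}(\psi)=|E_\psi|-|V_\psi|$, with $E_\psi$ the undirected edges. A graph is pruned if every vertex has degree at least two (degree = number of directed edges with that tail; a whole-loop contributes two). *)

From mathcomp Require Import all_boot all_order all_algebra.
Set Implicit Arguments. Unset Strict Implicit. Unset Printing Implicit Defensive.
Import GRing.Theory Num.Theory.

(* A finite graph with multiple edges and whole-loops, but no half-loops:
   vertex set V, (undirected) edge set E, each edge e having two endpoints
   ends e = (a, b) (the orientation of the pair is irrelevant; a whole-loop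
   at v is an edge with ends e = (v, v)). Each undirected edge gives two
   directed edges, one with tail a and one with tail b. *)

Section Graphs.
Variables (V E : finType) (ends : E -> V * V).

(* degree = number of directed edges with tail v; a whole-loop counts twice *)
Definition deg (v : V) : nat :=
  #|[set e | (ends e).1 == v]| + #|[set e | (ends e).2 == v]|.

Definition pruned : Prop := forall v : V, 2 <= deg v.

Definition adj : rel V :=
  fun u w => [exists e, (ends e == (u, w)) || (ends e == (w, u))].

Definition component (v : V) : {set V} := [set w | connect adj v w].

Definition induced_order (C : {set V}) : int :=
  (#|[set e | ((ends e).1 \in C) && ((ends e).2 \in C)]|%:Z - #|C|%:Z)%R.

Definition graph_order : int := (#|E|%:Z - #|V|%:Z)%R.

Definition is_subgraph (VS : {set V}) (ES : {set E}) : Prop :=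
  forall e, e \in ES -> ((ends e).1 \in VS) && ((ends e).2 \in VS).

Definition sub_order (VS : {set V}) (ES : {set E}) : int :=
  (#|ES|%:Z - #|VS|%:Z)%R.

End Graphs.

From mathcomp Require Import all_boot all_order all_algebra zify.
Set Implicit Arguments. Unset Strict Implicit.
Import Order.TTheory GRing.Theory Num.Theory.

(* Let W and F be the vertices and edges outside the subgraph. Every edge with
   an endpoint in W lies in F, so counting endpoints in W with the pruning bound
   gives 2|W| <= sum of degrees over W <= 2|F|. If |F| <= |W| all of this is
   tight: W consists of vertices of degree 2 and no edge leaves W. A nonempty
   such W would contain a whole component, whose order is then at most 0; so
   W, and then F, is empty, i.e. the subgraph is not proper. Hence |W| < |F|,
   which is ord(psi_1) < ord(psi_2). *)

Lemma sum_card_fibers (T U : finType) (f : T -> U) (S : {set U}) :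
  \sum_(u in S) #|[set x | f x == u]| = #|[set x | f x \in S]|.
Proof.
rewrite -sum1dep_card (partition_big f (mem S)) //=.
apply: eq_bigr => u Su; rewrite -sum1dep_card.
by apply: eq_bigl => x; case: eqP => [->|]; rewrite ?Su ?andbF.
Qed.

Section Graphs.
Variables (V E : finType) (ends : E -> V * V).

Lemma sum_deg (S : {set V}) :
  \sum_(v in S) deg ends v =
  #|[set e | (ends e).1 \in S]| + #|[set e | (ends e).2 \in S]|.
Proof. by rewrite big_split /= !sum_card_fibers. Qed.

Lemma induced_order_le0 (C : {set V}) :
  {in C, forall v, deg ends v <= 2} -> (induced_order ends C <= 0)%R.
Proof.
move=> deg_le2; rewrite /induced_order subr_le0 lez_nat.
have sub1 : [set e | ((ends e).1 \in C) && ((ends e).2 \in C)]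
              \subset [set e | (ends e).1 \in C].
  by apply/subsetP => e; rewrite !inE => /andP[].
have sub2 : [set e | ((ends e).1 \in C) && ((ends e).2 \in C)]
              \subset [set e | (ends e).2 \in C].
  by apply/subsetP => e; rewrite !inE => /andP[].
have : \sum_(v in C) deg ends v <= \sum_(v in C) 2 by apply: leq_sum.
rewrite sum_deg sum_nat_const.
move: (subset_leq_card sub1) (subset_leq_card sub2); lia.
Qed.

Definition ends_agree (S : {set V}) : Prop :=
  forall e, ((ends e).1 \in S) = ((ends e).2 \in S).

Lemma closed_adj (S : {set V}) : ends_agree S -> closed (adj ends) S.
Proof.
move=> agree u w /existsP[e /orP[] /eqP ends_e]; have := agree e;
  by rewrite ends_e.
Qed.

Lemma component_subset (S : {set V}) v :
  ends_agree S -> v \in S -> component ends v \subset S.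
Proof.
move=> agree Sv; apply/subsetP => w; rewrite inE => /(closed_connect (closed_adj agree)).
by rewrite Sv => <-.
Qed.

Lemma ends_agree_deg_le2_set0 (S : {set V}) :
  (forall v, (0 < induced_order ends (component ends v))%R) ->
  ends_agree S -> {in S, forall v, deg ends v <= 2} -> S = set0.
Proof.
move=> order_gt0 agree deg_le2; case: (set_0Vmem S) => // -[v Sv].
have /subsetP sub := component_subset agree Sv.
have := induced_order_le0 (fun w Cw => deg_le2 w (sub w Cw)).
by rewrite leNgt order_gt0.
Qed.

Lemma card_compl_le_ends_agree_deg_le2 (VS : {set V}) (ES : {set E}) :
  pruned ends -> is_subgraph ends VS ES -> #|~: ES| <= #|~: VS| ->
  ends_agree (~: VS) /\ {in ~: VS, forall v, deg ends v <= 2}.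
Proof.
move=> pruned_g sub le_FW.
have sub1 : [set e | (ends e).1 \in ~: VS] \subset ~: ES.
  by apply/subsetP => e; rewrite !inE; apply: contra => /sub/andP[->].
have sub2 : [set e | (ends e).2 \in ~: VS] \subset ~: ES.
  by apply/subsetP => e; rewrite !inE; apply: contra => /sub/andP[_ ->].
(* With W := ~: VS and F := ~: ES, each step of 2|W| <= sum of degrees over W
   <= 2|F| is tight under |F| <= |W|; the leqif equality conditions say what
   that means. *)
have [le_W eq_W] := leqif_sum (fun v (_ : v \in ~: VS) => leqif_eq (pruned_g v)).
have [le1 eq1] := subset_leqif_cards sub1.
have [le2 eq2] := subset_leqif_cards sub2.
rewrite sum_nat_const sum_deg in le_W eq_W.
have /forall_inP deg2 : [forall (v | v \in ~: VS), 2 == deg ends v].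
  by rewrite -eq_W; apply/eqP; lia.
have /eqP set1F : [set e | (ends e).1 \in ~: VS] == ~: ES.
  by rewrite -eq1; apply/eqP; lia.
have /eqP set2F : [set e | (ends e).2 \in ~: VS] == ~: ES.
  by rewrite -eq2; apply/eqP; lia.
split=> [e | v /deg2 /eqP <-] //.
by move: set1F; rewrite -set2F => /setP/(_ e); rewrite !inE.
Qed.

End Graphs.

Theorem theorem2p8 (V E : finType) (ends : E -> V * V) :
  pruned ends ->
  (forall v : V, (0 < induced_order ends (component ends v))%R) ->
  forall (VS : {set V}) (ES : {set E}),
    is_subgraph ends VS ES ->
    (VS != [set: V]) || (ES != [set: E]) ->
    (sub_order VS ES < @graph_order V E)%R.
Proof.
move=> pruned_g order_gt0 VS ES sub proper.
suff : #|~: VS| < #|~: ES|.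
  by move: (cardsC VS) (cardsC ES); rewrite /sub_order /graph_order; lia.
rewrite ltnNge; apply/negP => le_FW.
have [agree deg_le2] := card_compl_le_ends_agree_deg_le2 pruned_g sub le_FW.
have W0 := ends_agree_deg_le2_set0 order_gt0 agree deg_le2.
have F0 : ~: ES = set0 by apply/eqP; rewrite -cards_eq0 -leqn0 -(cards0 V) -W0.
by move: proper; rewrite -[VS]setCK -[ES]setCK W0 F0 !setC0 !eqxx.
Qed.
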